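(* Let $G=(V,E)$ be an undirected graph with degree bounds $b_v\in\mathbb{R}^+\cup\{\infty\}$, and let $(s_1,t_1),\dots,(s_m,t_m)$ be a demand sequence whose endpoints are distinct vertices, each of degree one in $G$ and with degree bound $\infty$. Fix an optimal offline solution $H^*$ (a subgraph connecting every demand pair and minimizing $\max_v\ell_{H^*}(v)=\mathrm{OPT}$), and let $\Delta>0$ be the minimum degree bound of a vertex with non-zero degree in $H^*$. Run the greedy algorithm GA (described in the context), let $H_{\mathrm{GA}}$ be its final output and $\tau_i$ the arrival threshold of demand $i$. For $r>0$ let $\Gamma_\Delta(r)=\{v\in V:\ \ell^+_{H_{\mathrm{GA}}}(v)\ge r\text{ and } b_v\ge\Delta\}$, $D(r)=\{i:\tau_i\ge r\}$, and $b(\Gamma_\Delta(r))=\sum_{v\in\Gamma_\Delta(r)}b_v$. Then for every $r>0$, $$\frac{|D(r)|}{b(\Gamma_\Delta(r))}\le \mathrm{OPT}.$$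
   Context: For a subgraph $H\subseteq G$, $\deg_H(v)$ is the degree of $v$ in $H$, $\ell_H(v)=\deg_H(v)/b_v$ is its load, and $\ell^+_H(v)=\ell_H(v)+2/b_v$ its uptick load. Greedy algorithm GA: start with $H=\emptyset$. An edge $(u,v)$ of $G$ is an extension edge w.r.t. $H$ if $u$ and $v$ are not connected in $H$. For an $(s,t)$-path $P$ in $G$, its extension part $P^*$ is the set of its extension edges, and $\ell^+_H(P^* )=\max_{v\in V(P^* )}\ell^+_H(v)$ with $V(P^* )$ the endpoints of edges of $P^*$. On arrival of demand $(s_i,t_i)$, with $H$ the current edge set, GA chooses an $(s_i,t_i)$-path $P_i$ minimizing $\ell^+_H(P_i^* )$, breaking ties in favor of fewer edges; the arrival threshold is $\tau_i=\ell^+_H(P_i^* )$; then it sets $H\leftarrow H\cup P_i^*$. *)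

From HB Require Import structures.
From mathcomp Require Import all_boot all_order all_algebra.
Set Implicit Arguments. Unset Strict Implicit. Unset Printing Implicit Defensive.
Import Order.TTheory GRing.Theory Num.Theory.
Local Open Scope ring_scope.

Section Defs.
Variable R : realFieldType.
Variable V : finType.

(* A graph / subgraph is a set of edges; an edge is a 2-element vertex set.
   Degree bounds: [b v = Some c] is the finite bound c > 0, [None] is infinity. *)
Definition edges := {set {set V}}.
Definition bounds := V -> option R.

Definition adj (H : edges) : rel V := fun x y => [set x; y] \in H.
Definition connected (H : edges) (u v : V) : bool := connect (adj H) u v.

Definition deg (H : edges) (v : V) : nat := #|[set e in H | v \in e]|.

Definition load (b : bounds) (H : edges) (v : V) : R :=
  match b v with Some c => (deg H v)%:R / c | None => 0 end.
Definition uload (b : bounds) (H : edges) (v : V) : R :=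
  match b v with Some c => (deg H v)%:R / c + 2 / c | None => 0 end.

Definition is_path (E : edges) (s t : V) (p : seq V) : bool :=
  [&& path (adj E) s p, last s p == t & uniq (s :: p)].

Definition ext_pairs (H : edges) (s : V) (p : seq V) : seq (V * V) :=
  [seq xy <- zip (s :: p) p | ~~ connected H xy.1 xy.2].
Definition Pstar (H : edges) (s : V) (p : seq V) : edges :=
  [set e | has (fun xy => e == [set xy.1; xy.2]) (ext_pairs H s p)].
Definition VPstar (H : edges) (s : V) (p : seq V) : {set V} :=
  [set v | has (fun xy => (v == xy.1) || (v == xy.2)) (ext_pairs H s p)].
Definition thr (b : bounds) (H : edges) (s : V) (p : seq V) : R :=
  \big[Num.max/0]_(v in VPstar H s p) uload b H v.

Definition greedy_choice (E : edges) (b : bounds) (H : edges) (s t : V) (p : seq V) : Prop :=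
  is_path E s t p /\
  forall q, is_path E s t q ->
    thr b H s p < thr b H s q \/ (thr b H s p = thr b H s q /\ (size p <= size q)%N).

Fixpoint GA_run_from (E : edges) (b : bounds) (H : edges)
    (dem : seq (V * V)) (ps : seq (seq V)) : Prop :=
  match dem, ps with
  | [::], [::] => True
  | d :: dem', p :: ps' =>
      greedy_choice E b H d.1 d.2 p /\ GA_run_from E b (H :|: Pstar H d.1 p) dem' ps'
  | _, _ => False
  end.
Definition GA_run E b dem ps := GA_run_from E b set0 dem ps.

Fixpoint taus_from (b : bounds) (H : edges) (dem : seq (V * V)) (ps : seq (seq V)) : seq R :=
  match dem, ps with
  | d :: dem', p :: ps' => thr b H d.1 p :: taus_from b (H :|: Pstar H d.1 p) dem' ps'
  | _, _ => [::]
  end.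
Definition taus b dem ps := taus_from b set0 dem ps.

Fixpoint final_from (H : edges) (dem : seq (V * V)) (ps : seq (seq V)) : edges :=
  match dem, ps with
  | d :: dem', p :: ps' => final_from (H :|: Pstar H d.1 p) dem' ps'
  | _, _ => H
  end.
Definition H_GA dem ps := final_from set0 dem ps.

Definition feasible (E : edges) (dem : seq (V * V)) (H : edges) : Prop :=
  H \subset E /\ forall d, d \in dem -> connected H d.1 d.2.
Definition maxload (b : bounds) (H : edges) : R := \big[Num.max/0]_v load b H v.
Definition optimal (E : edges) (b : bounds) (dem : seq (V * V)) (H : edges) : Prop :=
  feasible E dem H /\ forall H', feasible E dem H' -> maxload b H <= maxload b H'.

Definition le_ext (x y : option R) : bool :=
  match x, y with
  | _, None => true
  | None, Some _ => false
  | Some a, Some c => a <= c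
  end.
Definition min_ext (x y : option R) : option R := if le_ext x y then x else y.

Definition Delta (b : bounds) (Hs : edges) : option R :=
  \big[min_ext/None]_(v | (0 < deg Hs v)%N) b v.

Definition Gamma (b : bounds) (Hs HG : edges) (r : R) : {set V} :=
  [set v | (r <= uload b HG v) && le_ext (Delta b Hs) (b v)].
Definition bval (b : bounds) (v : V) : R := if b v is Some c then c else 0.
End Defs.

(* Let Y be the edges of H* whose two endpoints both have uptick load below r
   in H_GA.  When a demand with threshold >= r arrives, its endpoints are not
   connected in H u Y for the current H: otherwise a simple path in H u Y would
   have all its extension edges in Y, hence threshold < r, and the greedy
   algorithm would have preferred it.  So adding the pairs (s_i, t_i) of these
   demands to Y merges two components each time; since all these pairs are
   connected in H*, which arises from Y by adding the edges of H* \ Y, this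
   gives |D(r)| <= |H* \ Y|.  Every edge of H* \ Y has an endpoint in
   Gamma_Delta(r), whence |H* \ Y| <= sum over Gamma_Delta(r) of deg_H*(v)
   <= OPT * b(Gamma_Delta(r)). *)

From mathcomp Require Import all_boot all_order all_algebra.
Import Order.TTheory GRing.Theory Num.Theory.
Set Implicit Arguments. Unset Strict Implicit. Unset Printing Implicit Defensive.
Local Open Scope ring_scope.

Section Components.
Variable V : finType.
Implicit Types (A B : edges V) (e : {set V}) (x y z u v w : V).

Lemma adj_sym A : symmetric (adj A).
Proof. by move=> x y; rewrite /adj setUC. Qed.

Lemma connected_sym A : symmetric (connected A).
Proof. exact/sym_connect_sym/adj_sym. Qed.

Lemma connected_subset A B : A \subset B -> subrel (connected A) (connected B).
Proof. by move=> sAB; apply: connect_sub => x y Axy; apply/connect1/(subsetP sAB). Qed.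

Lemma adj_setU1 e A x y : adj (e |: A) x y = ([set x; y] == e) || adj A x y.
Proof. by rewrite /adj in_setU1. Qed.

Lemma adj_setU2_mem A x y u v :
  adj ([set x; y] |: A) u v -> adj A u v \/ u \in [set x; y] /\ v \in [set x; y].
Proof.
rewrite adj_setU1 => /orP[/eqP e_uv | ]; last by left.
by right; rewrite -e_uv set21 set22.
Qed.

Lemma subrel_adj_setU2 A B x y :
  subrel (adj A) (connected B) -> connected B x y ->
  subrel (adj ([set x; y] |: A)) (connected B).
Proof.
move=> AB Bxy u v /adj_setU2_mem[/AB // | []].
rewrite !inE => /pred2P[]-> /pred2P[]->;
  [exact: connect0 | done | by rewrite connected_sym | exact: connect0].
Qed.

Lemma connected_setU2_other A x y z :
  ~~ connected A z x -> ~~ connected A z y ->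
  connected ([set x; y] |: A) z =1 connected A z.
Proof.
move=> zx zy w; apply/idP/idP; last exact: connected_subset (subsetUr _ _) _ _.
have closedA : closed (adj ([set x; y] |: A)) (connected A z).
  apply: intro_closed => [|u v]; first exact: connected_sym.
  case/adj_setU2_mem => [Auv | [+ _]] zu; first exact: connect_trans zu (connect1 Auv).
  by rewrite !inE => /pred2P[] e_u; [case/negP: zx | case/negP: zy]; rewrite -e_u.
by move/(closed_connect closedA)/esym; rewrite !inE => ->; apply: connect0.
Qed.

Lemma connected_setU2_end A x y z :
  connected ([set x; y] |: A) z x = connected A z x || connected A z y.
Proof.
have sA := connected_subset (subsetUr [set [set x; y]] A).
apply/idP/idP => [| /orP[/sA // | /sA zy]].
  by apply: contraLR => /norP[zx zy]; rewrite connected_setU2_other.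
by apply: connect_trans zy (connect1 _); rewrite adj_setU1 setUC eqxx.
Qed.

Lemma n_comp_mono A B :
  subrel (adj A) (connected B) -> (n_comp (adj B) V <= n_comp (adj A) V)%N.
Proof.
move=> AB; rewrite /n_comp_mem.
apply: leq_trans (leq_image_card (fingraph.root (adj B)) _).
apply/subset_leq_card/subsetP => z; rewrite !inE andbT => /eqP rz.
apply/imageP; exists (fingraph.root (adj A) z).
  by rewrite !inE roots_root //; apply: connected_sym.
rewrite -{1}rz; apply/(fingraph.rootP (connected_sym B)).
exact: connect_sub AB _ _ (connect_root _ z).
Qed.

Lemma n_comp_setU2 A x y :
  n_comp (adj A) V = (n_comp (adj ([set x; y] |: A)) V + ~~ connected A x y)%N.
Proof.
(* Split V into the component a of x after adding the edge, which is the
   closure of {x, y} before, and its complement, where nothing changes. *)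
set A' := _ |: A; set a := connected A' x.
have a_closure : a =i closure (adj A) (pred2 x y).
  move=> z; rewrite /a !inE connected_sym connected_setU2_end.
  apply/orP/pred0Pn => [[zx | zy] | [t /andP[/= zt /pred2P[] e_t]]].
  - by exists x; rewrite /= !inE eqxx andbT.
  - by exists y; rewrite /= !inE eqxx orbT andbT.
  - by left; rewrite -e_t.
  - by right; rewrite -e_t.
have out_a z : z \notin a -> fingraph.root (adj A') z = fingraph.root (adj A) z.
  rewrite /a !inE connected_sym connected_setU2_end => /norP[zx zy].
  by rewrite /fingraph.root (eq_pick (connected_setU2_other zx zy)).
rewrite (n_compC a (adj A)) (n_compC a (adj A')) (eq_n_comp_r a_closure).
rewrite (n_comp_closure2 (connected_sym A)) (n_comp_connect (connected_sym A')).
have -> : n_comp (adj A') [predC a] = n_comp (adj A) [predC a].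
  apply: eq_card => z; rewrite !inE /roots.
  by case: (boolP (a z)) => az; rewrite ?andbF // out_a.
by rewrite add1n addSn addnC.
Qed.

Lemma n_comp_setU1 A e : (n_comp (adj A) V <= (n_comp (adj (e |: A)) V).+1)%N.
Proof.
(* [adj] only sees edges of the form [set x; y]; any other e changes nothing. *)
case: (pickP (fun xy : V * V => e == [set xy.1; xy.2])) => [[x y] /eqP -> | not2].
  by rewrite (n_comp_setU2 A x y) -addn1 leq_add2l leq_b1.
suff /eq_connect/eq_n_comp-> : adj (e |: A) =2 adj A by [].
by move=> u v; rewrite adj_setU1 eq_sym (not2 (u, v)).
Qed.

Lemma n_comp_setU A B : (n_comp (adj A) V <= n_comp (adj (A :|: B)) V + #|B|)%N.
Proof.
rewrite -[B in A :|: B]set_enum cardE; elim: (enum B) => [|e s IHs] /=.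
  by rewrite set_nil setU0 addn0.
rewrite set_cons setUCA addnS; apply: leq_trans IHs _.
by rewrite -addSn leq_add2r n_comp_setU1.
Qed.

End Components.

Section Paths.
Variables (T : finType) (e : rel T).

Lemma path_mem_zip x p xy : path e x p -> xy \in zip (x :: p) p -> e xy.1 xy.2.
Proof.
elim: p x => [|y p IHp] x //= /andP[exy y_p].
by rewrite inE => /predU1P[-> // | /(IHp _ y_p)].
Qed.

Lemma connect_last_zip x p :
  (forall xy, xy \in zip (x :: p) p -> connect e xy.1 xy.2) -> connect e x (last x p).
Proof.
elim: p x => [|y p IHp] x /= conn_zip; first exact: connect0.
apply: connect_trans (conn_zip (x, y) (mem_head _ _)) (IHp y _) => xy xy_p.
by apply: conn_zip; rewrite inE xy_p orbT.
Qed.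

End Paths.

Section Greedy.
Variables (R : realFieldType) (V : finType) (b : bounds R V).
Implicit Types (E H A Y : edges V) (r : R) (s t v : V) (p q : seq V).

Lemma Pstar_subset E H s p : path (adj E) s p -> Pstar H s p \subset E.
Proof.
move=> p_path; apply/subsetP => e; rewrite inE => /hasP[xy].
by rewrite mem_filter => /andP[_ /(path_mem_zip p_path) xy_E] /eqP ->.
Qed.

Lemma connected_Pstar E H s t p : is_path E s t p -> connected (H :|: Pstar H s p) s t.
Proof.
case/and3P=> _ /eqP <- _; apply: connect_last_zip => xy xy_p.
have [H_xy | not_H_xy] := boolP (connected H xy.1 xy.2).
  exact: connected_subset (subsetUl _ _) _ _ H_xy.
apply/connect1; rewrite /adj in_setU inE; apply/orP; right.
by apply/hasP; exists xy; rewrite // mem_filter not_H_xy.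
Qed.

Lemma final_from_subset H dem ps : H \subset final_from H dem ps.
Proof.
elim: dem ps H => [|d dem IH] [|p ps] H //=.
exact: subset_trans (subsetUl _ _) (IH _ _).
Qed.

Lemma greedy_choice_thr_le E H s t p q :
  greedy_choice E b H s t p -> is_path E s t q -> thr b H s p <= thr b H s q.
Proof. by case=> _ p_min /p_min[/ltW | [-> _]]. Qed.

Definition low_edges H r A : edges V := [set e in A | [forall v in e, uload b H v < r]].

Lemma low_edges_sub H r A : low_edges H r A \subset A.
Proof. by apply/subsetP => e; rewrite inE => /andP[]. Qed.

Lemma low_path E H Y r s t :
  0 < r -> H \subset E -> Y \subset low_edges H r E ->
  connected (H :|: Y) s t -> exists2 q, is_path E s t q & thr b H s q < r.
Proof.
move=> r_pos HE YE /connectP[p p_path ->]; case: (shortenP p_path) => q q_path q_uniq _.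
have HY_E : H :|: Y \subset E.
  by rewrite subUset HE (subset_trans YE) ?low_edges_sub.
exists q.
  by rewrite /is_path eqxx q_uniq !andbT; apply: (sub_path _ q_path) => u v /(subsetP HY_E).
apply: bigmax_lt => // v; rewrite inE => /hasP[xy]; rewrite mem_filter => /andP[not_H_xy xy_q] v_xy.
have : [set xy.1; xy.2] \in low_edges H r E.
  have := path_mem_zip q_path xy_q; rewrite /adj in_setU => /orP[H_xy | /(subsetP YE) //].
  by rewrite /connected connect1 in not_H_xy.
rewrite inE => /andP[_ /forallP/(_ v)/implyP]; apply.
by case/orP: v_xy => /eqP ->; rewrite !inE eqxx ?orbT.
Qed.

Hypothesis b_pos : forall v c, b v = Some c -> 0 < c.

Lemma uload_subset H H' v : H \subset H' -> uload b H v <= uload b H' v.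
Proof.
move=> sHH'; rewrite /uload; case b_v: (b v) => [c|//].
rewrite lerD2r ler_pM2r ?invr_gt0 ?(b_pos b_v) // ler_nat.
by apply/subset_leq_card/subsetP => e; rewrite !inE => /andP[/(subsetP sHH') -> ->].
Qed.

Lemma low_edges_subset H H' r A A' :
  H \subset H' -> A \subset A' -> low_edges H' r A \subset low_edges H r A'.
Proof.
move=> sHH' sAA'; apply/subsetP => e; rewrite !inE => /andP[e_A /forallP low_e].
rewrite (subsetP sAA') //=; apply/forallP => v; apply/implyP => v_e.
exact: le_lt_trans (uload_subset _ sHH') (implyP (low_e v) v_e).
Qed.

End Greedy.

Section HighDemands.
Variables (R : realFieldType) (V : finType) (E Hs Hf : edges V) (b : bounds R V) (r : R).
Hypotheses (b_pos : forall v c, b v = Some c -> 0 < c) (r_pos : 0 < r) (HsE : Hs \subset E).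

Let Y := low_edges b Hf r Hs.

(* D holds one edge {s_i, t_i} per high-threshold demand served so far. *)
Lemma count_high_n_comp dem ps H D :
  GA_run_from E b H dem ps -> H \subset E -> final_from H dem ps = Hf ->
  subrel (adj D) (connected H) -> subrel (adj D) (connected Hs) ->
  (forall d, d \in dem -> connected Hs d.1 d.2) ->
  (count (fun tau => (r <= tau)%R) (taus_from b H dem ps) + n_comp (adj Hs) V
     <= n_comp (adj (Y :|: D)) V)%N.
Proof.
have YHs : Y \subset Hs := low_edges_sub _ _ _ _.
elim: dem ps H D => [|d dem IH] [|p ps] H D //= run HE H_Hf DH DHs dem_Hs.
  apply: n_comp_mono => u v; rewrite /adj in_setU => /orP[/(subsetP YHs) | /DHs //].
  exact: connect1.
case: run => [[p_path p_min] run]; set H' := H :|: Pstar H d.1 p.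
have H'E : H' \subset E by rewrite subUset HE Pstar_subset //; case/and3P: p_path.
have DH' : subrel (adj D) (connected H').
  by move=> u v /DH; apply: connected_subset (subsetUl _ _) u v.
have dem_Hs' d' : d' \in dem -> connected Hs d'.1 d'.2.
  by move=> d'_dem; apply: dem_Hs; rewrite inE d'_dem orbT.
have [high | _] := leP r (thr b H d.1 p); last exact: IH.
have not_conn : ~~ connected (Y :|: D) d.1 d.2.
  have Y_low : Y \subset low_edges b H r E.
    apply: low_edges_subset => //; rewrite -H_Hf.
    exact: subset_trans (subsetUl _ _) (final_from_subset _ _ _).
  have YD_HY : subrel (adj (Y :|: D)) (connected (H :|: Y)).
    move=> u v; rewrite /adj in_setU => /orP[Yuv | /DH].
      by apply: connect1; rewrite /adj in_setU Yuv orbT.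
    exact: connected_subset (subsetUl _ _) _ _.
  apply/negP => /(connect_sub YD_HY)/(low_path r_pos HE Y_low)[q q_path q_low].
  have := le_lt_trans (greedy_choice_thr_le (conj p_path p_min) q_path) q_low.
  by rewrite ltNge high.
rewrite [n_comp (adj (Y :|: D)) V](n_comp_setU2 _ d.1 d.2) not_conn.
rewrite setUCA add1n addSn addn1 ltnS.
apply: IH => //.
  exact: subrel_adj_setU2 DH' (connected_Pstar _ p_path).
exact: subrel_adj_setU2 DHs (dem_Hs d (mem_head _ _)).
Qed.

End HighDemands.

Lemma leq_card_bigcup (I T : finType) (P : pred I) (F : I -> {set T}) :
  (#|\bigcup_(i | P i) F i| <= \sum_(i | P i) #|F i|)%N.
Proof.
elim/big_ind2: _ => [|m A n B le_A le_B|//]; first by rewrite cards0.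
by rewrite (leq_trans (leq_card_setU A B)) ?leq_add.
Qed.

Section ExtendedBounds.
Variable R : realFieldType.
Implicit Types x y z : option R.

Lemma le_ext_trans x y z : le_ext x y -> le_ext y z -> le_ext x z.
Proof. by case: x y z => [a|] [c|] [d|] //=; apply: le_trans. Qed.

Lemma min_ext_lel x y : le_ext (min_ext x y) x.
Proof.
by case: x y => [a|] [c|]; rewrite /min_ext /= ?lexx //; case: leP => [_ | /ltW] /=; rewrite ?lexx.
Qed.

Lemma min_ext_ler x y : le_ext (min_ext x y) y.
Proof. by case: x y => [a|] [c|]; rewrite /min_ext //=; case: ifP => //= _; rewrite lexx. Qed.

End ExtendedBounds.

Section DegreeBounds.
Variables (R : realFieldType) (V : finType) (b : bounds R V).
Implicit Types (H Hs Hf : edges V) (r : R) (v : V).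

Lemma Delta_le Hs v : (0 < deg Hs v)%N -> le_ext (Delta b Hs) (b v).
Proof.
move=> v_deg; rewrite /Delta; elim: (index_enum V) (mem_index_enum v) => // u s IHs.
rewrite inE big_cons => /predU1P[<- | /IHs le_v]; first by rewrite v_deg min_ext_lel.
by case: ifP => // _; apply: le_ext_trans (min_ext_ler _ _) le_v.
Qed.

Lemma card_nonlow_edges Hs Hf r :
  (#|Hs :\: low_edges b Hf r Hs| <= \sum_(v in Gamma b Hs Hf r) deg Hs v)%N.
Proof.
apply: leq_trans (leq_card_bigcup _ (fun v => [set e in Hs | v \in e])).
apply/subset_leq_card/subsetP => e; rewrite !inE => /andP[not_low e_Hs].
move: not_low; rewrite e_Hs => /forallPn[v]; rewrite negb_imply -leNgt => /andP[v_e high_v].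
apply/bigcupP; exists v; last by rewrite inE e_Hs.
rewrite inE high_v Delta_le // /deg card_gt0.
by apply/set0Pn; exists e; rewrite inE e_Hs.
Qed.

Lemma Gamma_bounded Hs Hf r v : 0 < r -> v \in Gamma b Hs Hf r -> b v != None.
Proof. by move=> r_pos; rewrite inE /uload; case: (b v) => // /andP[]; rewrite leNgt r_pos. Qed.

Hypothesis b_pos : forall v c, b v = Some c -> 0 < c.

Lemma deg_le_maxload H v : b v != None -> (deg H v)%:R <= maxload b H * bval b v.
Proof.
rewrite /bval; case b_v: (b v) => [c|//] _; rewrite -ler_pdivrMr ?(b_pos b_v) //.
by have := le_bigmax 0 (load b H) v; rewrite /load b_v.
Qed.

End DegreeBounds.

Lemma count_high_le_card (R : realFieldType) (V : finType) (E Hs : edges V)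
    (b : bounds R V) (dem : seq (V * V)) (ps : seq (seq V)) (r : R) :
  (forall v c, b v = Some c -> 0 < c) -> 0 < r -> Hs \subset E ->
  (forall d, d \in dem -> connected Hs d.1 d.2) -> GA_run E b dem ps ->
  (count (fun tau => (r <= tau)%R) (taus b dem ps)
     <= #|Hs :\: low_edges b (H_GA dem ps) r Hs|)%N.
Proof.
move=> b_pos r_pos HsE Hs_dem run; set Y := low_edges _ _ _ _.
have YHs : Y \subset Hs := low_edges_sub _ _ _ _.
have no_adj A : subrel (adj (set0 : edges V)) (connected A) by move=> u v; rewrite /adj inE.
have := count_high_n_comp b_pos r_pos HsE run (sub0set E) erefl (no_adj _) (no_adj _) Hs_dem.
rewrite setU0 => /leq_trans/(_ (n_comp_setU Y (Hs :\: Y))).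
by rewrite -{1}(setIidPr YHs) setID addnC leq_add2l.
Qed.

Theorem lemma3 (R : realFieldType) (V : finType)
    (E : edges V) (b : bounds R V) (dem : seq (V * V))
    (Hstar : edges V) (ps : seq (seq V)) :
  (* G is a simple undirected graph *)
  (forall e, e \in E -> #|e| = 2%N) ->
  (* finite degree bounds are positive *)
  (forall v c, b v = Some c -> 0 < c) ->
  (* demand endpoints are pairwise distinct vertices *)
  uniq (flatten [seq [:: d.1; d.2] | d <- dem]) ->
  (* each endpoint has degree one in G and degree bound infinity *)
  (forall d, d \in dem -> forall v, (v == d.1) || (v == d.2) ->
       deg E v = 1%N /\ b v = None) ->
  (* Hstar is an optimal offline solution; OPT = maxload b Hstar *)
  optimal E b dem Hstar ->
  (* Delta > 0 *)
  (if Delta b Hstar is Some d then is_true (0 < d) else True) ->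
  (* ps is a run of GA on dem *)
  GA_run E b dem ps ->
  forall r : R, 0 < r ->
    (count (fun tau => r <= tau) (taus b dem ps))%:R
      <= maxload b Hstar * \sum_(v in Gamma b Hstar (H_GA dem ps) r) bval b v.
Proof.
move=> _ b_pos _ _ [[HsE Hs_dem] _] _ run r r_pos.
apply: (@le_trans _ _ (\sum_(v in Gamma b Hstar (H_GA dem ps) r) deg Hstar v)%:R).
  rewrite ler_nat; apply: leq_trans (card_nonlow_edges _ _ _ _).
  exact: count_high_le_card b_pos r_pos HsE Hs_dem run.
rewrite natr_sum mulr_sumr; apply: ler_sum => v v_Gamma.
exact/(deg_le_maxload b_pos)/(Gamma_bounded r_pos v_Gamma).
Qed.
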